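(* Let $\mathcal{M}=\langle M,\circ,e\rangle$ be an effective mge monoid and let $\mathcal{T}=\langle \Sigma^*\times\mathcal{M},Q,I,F,\Delta\rangle$ be a functional real-time monoidal finite-state transducer with $\langle\varepsilon,e\rangle\in L(\mathcal{T})$. Then there is a bimachine $\mathcal{B}=\langle\mathcal{M},\mathcal{A}_L,\mathcal{A}_R,\psi\rangle$ such that $\mathcal{A}_L$ has at most $2^{|Q|}$ states, $\mathcal{A}_R$ has at most $2^{|Q|}$ states, and $O_{\mathcal{B}}=O_{\mathcal{T}}$ (as partial functions $\Sigma^*\to M$).
   Context: A monoid $\langle M,\circ,e\rangle$ has right cancellation if $ac=bc$ implies $a=b$. A tuple $\langle m_1,\dots,m_n\rangle\in M^n$ is equalizable if there is $\langle x_1,\dots,x_n\rangle\in M^n$ (an equalizer) with $m_1x_1=\dots=m_nx_n$; an instance of an equalizer $\langle x_1,\dots,x_n\rangle$ is any $\langle x_1x,\dots,x_nx\rangle$ with $x\in M$; a most general equalizer (mge) is an equalizer of which every equalizer is an instance. An mge monoid is a monoid with right cancellation in which every equalizable pair has an mge. An element $m$ is invertible if $mn=e$ for some $n$ (denoted $m^{-1}$). An mge monoid is effective if (i) $M$ is represented as a recursive subset of $\mathbb{N}$ with computable operation, (ii) equality is decidable, (iii) it is decidable whether a pair is equalizable and there is a computable function $\eta:M^2\to M^2$ with $\eta(m,m')$ an mge of $\langle m,m'\rangle$ for every equalizable pair, (iv) inverses of invertible elements are computable. A monoidal finite-state transducer is $\mathcal{T}=\langle\Sigma^*\times\mathcal{M},Q,I,F,\Delta\rangle$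 with $\Sigma$ a finite alphabet, $Q$ finite, $I,F\subseteq Q$, and finite $\Delta\subseteq Q\times((\Sigma\cup\{\varepsilon\})\times M)\times Q$; it is real-time if $\Delta\subseteq Q\times(\Sigma\times M)\times Q$. The generalized transition relation $\Delta^*$ is the least set containing $\langle q,\langle\varepsilon,e\rangle,q\rangle$ for all $q$ and closed under: $\langle q_1,\langle u,w\rangle,q_2\rangle\in\Delta^*$ and $\langle q_2,\langle a,m\rangle,q_3\rangle\in\Delta$ imply $\langle q_1,\langle ua,wm\rangle,q_3\rangle\in\Delta^*$. $L(\mathcal{T})=\{\langle u,m\rangle:\exists p\in I,q\in F,\ \langle p,\langle u,m\rangle,q\rangle\in\Delta^*\}$. $\mathcal{T}$ is functional if $L(\mathcal{T})$ is (the graph of) a partial function, denoted $O_{\mathcal{T}}:\Sigma^*\to M$. A bimachine is $\mathcal{B}=\langle\mathcal{M},\mathcal{A}_L,\mathcal{A}_R,\psi\rangle$ where $\mathcal{A}_L=\langle\Sigma,L,s_L,L,\delta_L\rangle$ and $\mathcal{A}_R=\langle\Sigma,R,s_R,R,\delta_R\rangle$ are deterministic finite automata (all states final) and $\psi:L\times\Sigma\times R\to M$ is a partial function. Define $\psi^*(l,\varepsilon,r)=e$ and $\psi^*(l,t\sigma,r)=\psi^*(l,t,\delta_R(r,\sigma))\circ\psi(\delta_L^*(l,t),\sigma,r)$; the function represented by $\mathcal{B}$ is $O_{\mathcal{B}}(t)=\psi^*(s_L,t,s_R)$ (partial). *)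

From mathcomp Require Import all_boot.
Set Implicit Arguments.
Unset Strict Implicit.
Unset Printing Implicit Defensive.

Section Monoid.
Variables (M : countType) (op : M -> M -> M) (e : M).

Definition is_monoid : Prop :=
  [/\ forall a b c, op a (op b c) = op (op a b) c,
      forall a, op e a = a &
      forall a, op a e = a].

Definition right_cancellative : Prop :=
  forall a b c, op a c = op b c -> a = b.

Definition is_equalizer (m1 m2 : M) (x : M * M) : Prop :=
  op m1 x.1 = op m2 x.2.

Definition equalizable (m1 m2 : M) : Prop :=
  exists x, is_equalizer m1 m2 x.

Definition is_instance (x y : M * M) : Prop :=
  exists z, y = (op x.1 z, op x.2 z).

Definition is_mge (m1 m2 : M) (x : M * M) : Prop :=
  is_equalizer m1 m2 x /\
  forall y, is_equalizer m1 m2 y -> is_instance x y.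

Definition mge_monoid : Prop :=
  [/\ is_monoid, right_cancellative &
      forall m1 m2, equalizable m1 m2 -> exists x, is_mge m1 m2 x].

Definition invertible (m : M) : Prop := exists n, op m n = e.

(* Effectiveness: (i) M is a countType (injection into nat) and op is a Rocq
   function; (ii) equality is decidable (eqType); (iii) equalizability is
   decided by a function and an mge is given by a function eta; (iv) inverses
   of invertible elements are given by a function. *)
Definition effective_mge_monoid : Prop :=
  [/\ mge_monoid,
      (exists eqzb : M -> M -> bool,
          forall m1 m2, eqzb m1 m2 <-> equalizable m1 m2),
      (exists eta : M -> M -> M * M,
          forall m1 m2, equalizable m1 m2 -> is_mge m1 m2 (eta m1 m2)) &
      (exists inv : M -> M,
          forall m, invertible m -> op m (inv m) = e)].
End Monoid.

Section Transducer.
Variables (M : countType) (op : M -> M -> M) (e : M).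
Variables (Sigma Q : finType).
Variable Delta : seq (Q * Sigma * M * Q).

Inductive gen_trans : Q -> seq Sigma -> M -> Q -> Prop :=
| gen_refl q : gen_trans q [::] e q
| gen_step q1 u w q2 a m q3 :
    gen_trans q1 u w q2 -> (q2, a, m, q3) \in Delta ->
    gen_trans q1 (rcons u a) (op w m) q3.

Variables (I F : {set Q}).

Definition in_lang (u : seq Sigma) (m : M) : Prop :=
  exists p q, [/\ p \in I, q \in F & gen_trans p u m q].

Definition functional : Prop :=
  forall u m1 m2, in_lang u m1 -> in_lang u m2 -> m1 = m2.
End Transducer.

Section Bimachine.
Variables (M : countType) (op : M -> M -> M) (e : M).
Variables (Sigma L R : finType).
Variables (deltaL : L -> Sigma -> L) (deltaR : R -> Sigma -> R).
Variable psi : L -> Sigma -> R -> option M.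

Definition deltaL_star (l : L) (t : seq Sigma) : L := foldl deltaL l t.

(* psi_star_rev l rt r = psi^*(l, rev rt, r), by recursion on the last letter:
   psi^*(l, t s, r) = psi^*(l, t, deltaR r s) o psi(deltaL^*(l,t), s, r) *)
Fixpoint psi_star_rev (l : L) (rt : seq Sigma) (r : R) : option M :=
  match rt with
  | [::] => Some e
  | s :: rt' =>
      match psi_star_rev l rt' (deltaR r s),
            psi (deltaL_star l (rev rt')) s r with
      | Some a, Some b => Some (op a b)
      | _, _ => None
      end
  end.

Definition psi_star (l : L) (t : seq Sigma) (r : R) : option M :=
  psi_star_rev l (rev t) r.
End Bimachine.

From mathcomp Require Import all_boot.
From Stdlib Require Import ClassicalEpsilon.
Set Implicit Arguments. Unset Strict Implicit. Unset Printing Implicit Defensive.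

(* Both automata are subset constructions: after a prefix u the left one is in
   the set L_u of states reachable from I, and the right one, reading a suffix v
   from its end, is in the set R_v of states from which F is reachable.  By
   functionality and right cancellation, every run on u from I into a state q
   of L_u ∩ R_v has the same output a_u(q), and the tuple (a_u(q))_q is
   equalizable.  An mge x of it, chosen depending only on the pair (L_u, R_v),
   pads every a_u(q) to a common value c(u, v) = a_u(q) x(q).  On a letter a
   between u and v the bimachine outputs some z with c(u, a v) z = c(u a, v):
   the padded outputs after a form an equalizer of a_u, hence an instance of
   the mge.  By induction the bimachine outputs c(t, []), the output on t. *)

Section TupleMge.
Variables (M : countType) (op : M -> M -> M) (e : M).
Hypothesis opA : forall a b c, op a (op b c) = op (op a b) c.
Hypothesis op1m : forall a, op e a = a.
Hypothesis op_rcancel : right_cancellative op.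
Hypothesis pair_mge :
  forall m1 m2, equalizable op m1 m2 -> exists x, is_mge op m1 m2 x.
Variable Q : finType.
Implicit Types (S : {set Q}) (a x y : Q -> M).

Definition tuple_equalizer S a y :=
  {in S &, forall p q, op (a p) (y p) = op (a q) (y q)}.

Definition tuple_mge S a x := tuple_equalizer S a x /\
  forall y, tuple_equalizer S a y -> exists k, {in S, forall q, y q = op (x q) k}.

(* An mge of the tuple (a_q)_q extended by the unit, whose equalizers are the
   pairs (y, d) with d the common value of the a_q y_q; the extension lets the
   induction start from the empty tuple. *)
Lemma unit_extended_mge (s : seq Q) a :
    (exists y, {in s &, forall p q, op (a p) (y p) = op (a q) (y q)}) ->
  exists x c, {in s, forall p, op (a p) (x p) = c} /\
    forall y d, {in s, forall p, op (a p) (y p) = d} ->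
      exists k, {in s, forall p, y p = op (x p) k} /\ d = op c k.
Proof.
elim: s => [|q s IH] [y0 y0eq].
  exists (fun _ => e), e; split=> // y d _; exists d; split=> //.
have y0eq_s : {in s &, forall p p', op (a p) (y0 p) = op (a p') (y0 p')}.
  by move=> p p' sp sp'; apply: y0eq; rewrite inE ?sp ?sp' orbT.
have [x [c [xc xmin]]] := IH (ex_intro _ y0 y0eq_s).
have [k0 [_ ck0]] : exists k, {in s, forall p, y0 p = op (x p) k} /\
    op (a q) (y0 q) = op c k.
  by apply: xmin => p sp; apply: y0eq; rewrite ?inE ?sp ?eqxx ?orbT.
have [[g h] [/= cg gh_min]] : exists gh, is_mge op c (a q) gh.
  by apply: pair_mge; exists (k0, y0 q).
exists (fun p => if p == q then h else op (x p) g), (op c g); split.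
  move=> p; case: eqP => [-> _ //|/eqP nqp]; rewrite inE (negbTE nqp) /= => sp.
  by rewrite opA xc.
move=> y d yd.
have [k [yk dk]] : exists k, {in s, forall p, y p = op (x p) k} /\ d = op c k.
  by apply: xmin => p sp; apply: yd; rewrite inE sp orbT.
have [k' /= [kk' yk']] : is_instance op (g, h) (k, y q).
  by apply: gh_min; rewrite /is_equalizer /= -dk yd ?mem_head.
exists k'; split; last by rewrite dk kk' opA.
move=> p; case: eqP => [-> //|/eqP nqp]; rewrite inE (negbTE nqp) /= => sp.
by rewrite yk // kk' opA.
Qed.

Lemma tuple_mge_exists S a :
  (exists y, tuple_equalizer S a y) -> exists x, tuple_mge S a x.
Proof.
move=> [y0 y0eq].
have [|x [c [xc xmin]]] := @unit_extended_mge (enum S) a.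
  by exists y0 => p q; rewrite !mem_enum; apply: y0eq.
exists x; split.
  by move=> p q Sp Sq; rewrite !xc ?mem_enum.
move=> y yeq.
case: (set_0Vmem S) => [S0|[r Sr]].
  by exists e => q; rewrite S0 inE.
have [k [yk _]] : exists k, {in enum S, forall p, y p = op (x p) k} /\
    op (a r) (y r) = op c k.
  by apply: xmin => p; rewrite mem_enum => Sp; apply: yeq.
by exists k => q Sq; rewrite yk ?mem_enum.
Qed.

Lemma tuple_equalizer_transfer S a a' b y :
    tuple_equalizer S a b -> tuple_equalizer S a' b ->
  tuple_equalizer S a' y -> tuple_equalizer S a y.
Proof.
move=> ab a'b a'y.
have [x [a'x xmin]] := tuple_mge_exists (ex_intro _ y a'y).
have [k1 yk1] := xmin y a'y.
have [k2 bk2] := xmin b a'b.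
have ax : tuple_equalizer S a x.
  by move=> p q Sp Sq; apply: (@op_rcancel _ _ k2); rewrite -!opA -!bk2 //; apply: ab.
by move=> p q Sp Sq; rewrite !yk1 // !opA (ax p q Sp Sq).
Qed.

Lemma tuple_mge_transfer S a a' b x :
    tuple_equalizer S a b -> tuple_equalizer S a' b ->
  tuple_mge S a x -> tuple_mge S a' x.
Proof.
move=> ab a'b [ax xmin]; split=> [|y a'y].
  exact: tuple_equalizer_transfer a'b ab ax.
exact/xmin/(tuple_equalizer_transfer ab a'b).
Qed.

Lemma tuple_mge_unit S a : {in S, forall q, a q = e} -> tuple_mge S a (fun _ => e).
Proof.
move=> a1; split=> [p q Sp Sq|y yeq]; first by rewrite !a1.
case: (set_0Vmem S) => [S0|[r Sr]]; first by exists e => q; rewrite S0 inE.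
exists (y r) => q Sq; have := yeq q r Sq Sr.
by rewrite !a1 // !op1m.
Qed.
End TupleMge.

Section BimachineRuns.
Variables (M : countType) (op : M -> M -> M) (e : M) (Sigma L R : finType).
Variables (dL : L -> Sigma -> L) (dR : R -> Sigma -> R).
Variable ps : L -> Sigma -> R -> option M.

Lemma psi_star_rcons l u a r :
  psi_star op e dL dR ps l (rcons u a) r =
  match psi_star op e dL dR ps l u (dR r a), ps (deltaL_star dL l u) a r with
  | Some x, Some y => Some (op x y)
  | _, _ => None
  end.
Proof. by rewrite /psi_star rev_rcons /= revK. Qed.

Lemma psi_star_enum_rank l t r :
  psi_star op e (fun i a => enum_rank (dL (enum_val i) a))
    (fun j a => enum_rank (dR (enum_val j) a))
    (fun i a j => ps (enum_val i) a (enum_val j)) (enum_rank l) t (enum_rank r) =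
  psi_star op e dL dR ps l t r.
Proof.
have deltaL_rank s l' : deltaL_star (fun i a => enum_rank (dL (enum_val i) a))
    (enum_rank l') s = enum_rank (deltaL_star dL l' s).
  by elim: s l' => [|a s IHs] l' //=; rewrite enum_rankK IHs.
rewrite /psi_star; elim: (rev t) r => [|a rt IHrt] r' //=.
by rewrite enum_rankK IHrt deltaL_rank !enum_rankK.
Qed.
End BimachineRuns.

Lemma card_sets (T : finType) : #|{set T}| = 2 ^ #|T|.
Proof.
have setT_powerset : powerset [set: T] = [set: {set T}].
  by apply/setP => A; rewrite powersetE subsetT inE.
by rewrite -(cardsT {set T}) -setT_powerset card_powerset cardsT.
Qed.

Section SubsetBimachine.
Variables (M : countType) (op : M -> M -> M) (e : M).
Hypothesis opA : forall a b c, op a (op b c) = op (op a b) c.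
Hypothesis op1m : forall a, op e a = a.
Hypothesis opm1 : forall a, op a e = a.
Hypothesis op_rcancel : right_cancellative op.
Hypothesis pair_mge :
  forall m1 m2, equalizable op m1 m2 -> exists x, is_mge op m1 m2 x.
Variables (Sigma Q : finType) (I F : {set Q}) (Delta : seq (Q * Sigma * M * Q)).
Hypothesis Hfun : functional op e Delta I F.

Local Notation run := (gen_trans op e Delta).
Local Notation accepts := (in_lang op e Delta I F).
Implicit Types (X Y : {set Q}) (u v : seq Sigma).

Lemma run_nilP p w q : run p [::] w q <-> w = e /\ p = q.
Proof.
split=> [|[-> ->]]; last exact: gen_refl.
move Enil: [::] => s pq; case: pq Enil => // q1 u w' q2 a m q3 _ _.
by case: u.
Qed.

Lemma run_rconsP p u a w q : run p (rcons u a) w q <->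
  exists r w' m, [/\ run p u w' r, (r, a, m, q) \in Delta & w = op w' m].
Proof.
split=> [|[r [w' [m [pr rq ->]]]]]; last exact: gen_step pr rq.
move Eua: (rcons u a) => s pq; case: pq Eua => [?|q1 u' w' q2 a' m q3 pr rq].
  by case: u.
by case/rcons_inj => -> ->; exists q2, w', m.
Qed.

Lemma run_catP p u v w q : run p (u ++ v) w q <->
  exists r w1 w2, [/\ run p u w1 r, run r v w2 q & w = op w1 w2].
Proof.
elim/last_ind: v w q => [|v a IHv] w q.
  rewrite cats0; split=> [pq|[r [w1 [w2 [pr /run_nilP[-> <-] ->]]]]].
    by exists q, w, e; rewrite opm1; split=> //; apply: gen_refl.
  by rewrite opm1.
rewrite -rcons_cat run_rconsP; split.
  move=> [r [w' [m [/IHv[r' [w1 [w2 [pr' r'r ->]]]] rq ->]]]].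
  exists r', w1, (op w2 m); split=> //; first exact: gen_step r'r rq.
move=> [r [w1 [w2 [pr /run_rconsP[r' [w' [m [rr' r'q ->]]]] ->]]]].
exists r', (op w1 w'), m; split=> //.
by apply/IHv; exists r, w1, w'.
Qed.

Lemma run_consP p a v w q : run p (a :: v) w q <->
  exists r m w', [/\ (p, a, m, r) \in Delta, run r v w' q & w = op m w'].
Proof.
have run1 r m : run p [:: a] m r <-> (p, a, m, r) \in Delta.
  rewrite -[[:: a]]/(rcons [::] a) run_rconsP; split.
    by move=> [r' [w' [m' [/run_nilP[-> ->] pr ->]]]]; rewrite op1m.
  by move=> pr; exists p, e, m; rewrite op1m; split=> //; apply: gen_refl.
rewrite -cat1s run_catP; split.
  by move=> [r [m [w' [/run1 pr rq ->]]]]; exists r, m, w'.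
by move=> [r [m [w' [pr rq ->]]]]; exists r, m, w'; split=> //; apply/run1.
Qed.

Definition edge p a q :=
  has (fun t : Q * Sigma * M * Q => [&& t.1.1.1 == p, t.1.1.2 == a & t.2 == q]) Delta.

Lemma edgeP p a q : reflect (exists m, (p, a, m, q) \in Delta) (edge p a q).
Proof.
apply: (iffP hasP) => [[[[[p' a'] m] q'] t /and3P[/= /eqP<- /eqP<- /eqP<-]]|[m t]].
  by exists m.
by exists (p, a, m, q); rewrite //= !eqxx.
Qed.

Definition post (X : {set Q}) a := [set q | [exists p in X, edge p a q]].
Definition pre (Y : {set Q}) a := [set p | [exists q in Y, edge p a q]].

Lemma postP X a q :
  reflect (exists p m, p \in X /\ (p, a, m, q) \in Delta) (q \in post X a).
Proof.
rewrite inE; apply: (iffP existsP) => [[p /andP[Xp /edgeP[m t]]]|[p [m [Xp t]]]].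
  by exists p, m.
by exists p; rewrite Xp; apply/edgeP; exists m.
Qed.

Lemma preP Y a p :
  reflect (exists m q, q \in Y /\ (p, a, m, q) \in Delta) (p \in pre Y a).
Proof.
rewrite inE; apply: (iffP existsP) => [[q /andP[Yq /edgeP[m t]]]|[m [q [Yq t]]]].
  by exists m, q.
by exists q; rewrite Yq; apply/edgeP; exists m.
Qed.

Definition Lset (u : seq Sigma) := foldl post I u.
Definition Rset (v : seq Sigma) := foldr (fun a Y => pre Y a) F v.

Lemma Lset_rcons u a : Lset (rcons u a) = post (Lset u) a.
Proof. exact: foldl_rcons. Qed.

Lemma LsetP u q : q \in Lset u <-> exists w, exists2 p, p \in I & run p u w q.
Proof.
elim/last_ind: u q => [|u a IHu] q.
  split=> [Iq|[w [p Ip /run_nilP[_ <-]]]] //.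
  by exists e, q => //; apply: gen_refl.
rewrite Lset_rcons; split.
  move=> /postP[p [m [/IHu[w [p0 Ip0 p0p]] t]]].
  by exists (op w m), p0 => //; apply: gen_step p0p t.
move=> [w [p0 Ip0 /run_rconsP[p [w' [m [p0p t _]]]]]].
by apply/postP; exists p, m; split=> //; apply/IHu; exists w', p0.
Qed.

Lemma RsetP v q : q \in Rset v <-> exists w, exists2 f, f \in F & run q v w f.
Proof.
elim: v q => [|a v IHv] q.
  split=> [Fq|[w [f Ff /run_nilP[_ ->]]]] //.
  by exists e, q => //; apply: gen_refl.
split.
  move=> /preP[m [r [/IHv[w [f Ff rf]] t]]].
  by exists (op m w), f => //; apply/run_consP; exists r, m, w.
move=> [w [f Ff /run_consP[r [m [w' [t rf _]]]]]].
by apply/preP; exists m, r; split=> //; apply/IHv; exists w', f.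
Qed.

Lemma accepts_cat u v p q f w1 w2 :
  p \in I -> run p u w1 q -> run q v w2 f -> f \in F -> accepts (u ++ v) (op w1 w2).
Proof.
by move=> Ip pq qf Ff; exists p, f; split=> //; apply/run_catP; exists q, w1, w2.
Qed.

Lemma meet_accepts u v : Lset u :&: Rset v != set0 <-> exists m, accepts (u ++ v) m.
Proof.
split=> [/set0Pn[q /setIP[/LsetP[w1 [p Ip pq]] /RsetP[w2 [f Ff qf]]]]|].
  by exists (op w1 w2); apply: accepts_cat pq qf Ff.
move=> [m [p [f [Ip Ff /run_catP[q [w1 [w2 [pq qf _]]]]]]]].
apply/set0Pn; exists q; rewrite inE.
by apply/andP; split; [apply/LsetP; exists w1, p | apply/RsetP; exists w2, f].
Qed.

Definition lout u q := epsilon (inhabits e) (fun w => exists2 p, p \in I & run p u w q).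
Definition rout v q := epsilon (inhabits e) (fun w => exists2 f, f \in F & run q v w f).

Lemma loutP u q : q \in Lset u -> exists2 p, p \in I & run p u (lout u q) q.
Proof. by move/LsetP; apply: epsilon_spec. Qed.

Lemma routP v q : q \in Rset v -> exists2 f, f \in F & run q v (rout v q) f.
Proof. by move/RsetP; apply: epsilon_spec. Qed.

Lemma lout_accepted u q : q \in Lset u -> q \in F -> accepts u (lout u q).
Proof. by move=> /loutP[p Ip pq] Fq; exists p, q. Qed.

Lemma lout_accepts u v q :
  q \in Lset u -> q \in Rset v -> accepts (u ++ v) (op (lout u q) (rout v q)).
Proof. by move=> /loutP[p Ip pq] /routP[f Ff qf]; apply: accepts_cat pq qf Ff. Qed.

Lemma lout_uniq u v p q w : p \in I -> run p u w q -> q \in Rset v -> w = lout u q.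
Proof.
move=> Ip pq Rq; have [f Ff qf] := routP Rq.
have Lq : q \in Lset u by apply/LsetP; exists w, p.
apply: (@op_rcancel _ _ (rout v q)); apply: Hfun (lout_accepts Lq Rq).
exact: accepts_cat pq qf Ff.
Qed.

Lemma rout_equalizer u v : tuple_equalizer op (Lset u :&: Rset v) (lout u) (rout v).
Proof.
move=> p q /setIP[Lp Rp] /setIP[Lq Rq].
exact: Hfun (lout_accepts Lp Rp) (lout_accepts Lq Rq).
Qed.

Definition class_mge (L R : {set Q}) (x : Q -> M) :=
  exists u, Lset u = L /\ tuple_mge op (L :&: R) (lout u) x.

(* At the initial left state the pad has to be trivial, as the bimachine
   outputs e on the empty prefix. *)
Definition mge_at (L R : {set Q}) : Q -> M :=
  if L == I then fun _ => e else epsilon (inhabits (fun _ => e)) (class_mge L R).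

Lemma mge_atP u v :
  tuple_mge op (Lset u :&: Rset v) (lout u) (mge_at (Lset u) (Rset v)).
Proof.
suff [u0 [Lu0 mge_u0]] : class_mge (Lset u) (Rset v) (mge_at (Lset u) (Rset v)).
  apply: (tuple_mge_transfer opA op1m op_rcancel pair_mge _ _ mge_u0).
    by rewrite -{1}Lu0; apply: rout_equalizer.
  exact: rout_equalizer.
rewrite /mge_at; case: eqP => [LuI|_].
  exists [::]; split=> //; apply: (tuple_mge_unit op1m) => q /setIP[Lq Rq].
  by rewrite LuI in Lq; rewrite -(lout_uniq Lq (gen_refl _ _ _ _) Rq).
apply: epsilon_spec.
have [x mge_x] :=
  tuple_mge_exists opA op1m pair_mge (ex_intro _ _ (@rout_equalizer u v)).
by exists x, u.
Qed.

(* The empty set, which is R_v for no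
   suffix v of a word in the domain, encodes the empty suffix, whose
   co-accessible states are F; this keeps the right automaton within 2^|Q|
   states. *)
Definition rset (r : {set Q}) := if r == set0 then F else r.
Definition rdelta (r : {set Q}) a := pre (rset r) a.
Definition rstar v := foldr (fun a r => rdelta r a) set0 v.

Lemma pre_set0 a : pre set0 a = set0.
Proof. by apply/setP => p; rewrite !inE; apply/existsP => -[q]; rewrite inE. Qed.

Lemma rstar_cons a v : Rset (a :: v) != set0 -> rstar (a :: v) = Rset (a :: v).
Proof.
elim: v a => [|b v IHv] a Rabv; first by rewrite /= /rdelta /rset eqxx.
have Rbv : Rset (b :: v) != set0.
  by apply: contraNneq Rabv => /= ->; rewrite pre_set0.
by rewrite -[rstar _]/(rdelta (rstar (b :: v)) a) /rdelta IHv // /rset (negbTE Rbv).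
Qed.

Lemma rset_rstar v : Rset v != set0 -> rset (rstar v) = Rset v.
Proof.
case: v => [|a v] Rv; first by rewrite /rset eqxx.
by rewrite rstar_cons // /rset (negbTE Rv).
Qed.

Lemma meet_rcons u a v :
  Lset (rcons u a) :&: Rset v != set0 -> Lset u :&: Rset (a :: v) != set0.
Proof. by move/meet_accepts; rewrite cat_rcons => /meet_accepts. Qed.

Definition pad (L r : {set Q}) : Q -> M :=
  if r == set0 then fun _ => e else mge_at L r.

Lemma pad_nil L : pad L (rstar [::]) = fun _ => e.
Proof. by rewrite /pad eqxx. Qed.

Lemma pad_cons L a v :
  Rset (a :: v) != set0 -> pad L (rstar (a :: v)) = mge_at L (Rset (a :: v)).
Proof. by move=> Rav; rewrite /pad rstar_cons // (negbTE Rav). Qed.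

Lemma pad_init r : pad I r = fun _ => e.
Proof. by rewrite /pad /mge_at eqxx; case: ifP. Qed.

Lemma pad_equalizer u v : Rset v != set0 ->
  tuple_equalizer op (Lset u :&: Rset v) (lout u) (pad (Lset u) (rstar v)).
Proof.
case: v => [_|a v Rav]; last by rewrite pad_cons //; case: (mge_atP u (a :: v)).
rewrite pad_nil => p q /setIP[Lp Fp] /setIP[Lq Fq]; rewrite !opm1.
exact: Hfun (lout_accepted Lp Fp) (lout_accepted Lq Fq).
Qed.

Definition common_out u v q := op (lout u q) (pad (Lset u) (rstar v) q).

Definition edge_into (r : {set Q}) a p (mq : M * Q) :=
  (p, a, mq.1, mq.2) \in Delta /\ mq.2 \in rset r.

Definition next_edge (r : {set Q}) a p : M * Q :=
  epsilon (inhabits (e, p)) (edge_into r a p).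

Definition step_out (L : {set Q}) a r p :=
  op (next_edge r a p).1 (pad (post L a) r (next_edge r a p).2).

Definition psi (L : {set Q}) a r : option M :=
  if post L a :&: rset r == set0 then None
  else Some (epsilon (inhabits e) (fun z => {in L :&: rdelta r a, forall p,
         step_out L a r p = op (mge_at L (rdelta r a) p) z})).

Lemma step_out_common u a v p : p \in Lset u -> p \in Rset (a :: v) ->
  exists2 q, q \in Lset (rcons u a) :&: Rset v &
    op (lout u p) (step_out (Lset u) a (rstar v) p) = common_out (rcons u a) v q.
Proof.
move=> Lp /preP[m0 [q0 [Rq0 t0]]].
have Rv : Rset v != set0 by apply/set0Pn; exists q0.
have : edge_into (rstar v) a p (next_edge (rstar v) a p).
  by apply: epsilon_spec; exists (m0, q0); rewrite /edge_into rset_rstar.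
rewrite /step_out /edge_into rset_rstar //; case: next_edge => m q /= [t Rq].
have Luaq : q \in Lset (rcons u a) by rewrite Lset_rcons; apply/postP; exists p, m.
exists q; first exact/setIP.
rewrite /common_out -Lset_rcons opA; congr op.
have [p0 Ip0 p0p] := loutP Lp.
exact: lout_uniq Ip0 (gen_step p0p t) Rq.
Qed.

Lemma psi_common u a v : Lset (rcons u a) :&: Rset v != set0 ->
  exists z, psi (Lset u) a (rstar v) = Some z /\
    {in Lset u :&: Rset (a :: v) & Lset (rcons u a) :&: Rset v, forall p q,
      op (common_out u (a :: v) p) z = common_out (rcons u a) v q}.
Proof.
move=> Luav; have Luav' := meet_rcons Luav.
have Rv : Rset v != set0 by apply: contraNneq Luav => ->; rewrite setI0.
have Rav : Rset (a :: v) != set0 by apply: contraNneq Luav' => ->; rewrite setI0.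
have rdeltaE : rdelta (rstar v) a = Rset (a :: v) by exact: rstar_cons.
have common_eq := pad_equalizer (u := rcons u a) Rv.
set P := fun z => {in Lset u :&: Rset (a :: v), forall p,
  step_out (Lset u) a (rstar v) p = op (mge_at (Lset u) (Rset (a :: v)) p) z}.
have [z zP] : exists z, P z.
  apply: (mge_atP u (a :: v)).2 => p p' /setIP[Lp Rp] /setIP[Lp' Rp'].
  have [q Sq ->] := step_out_common Lp Rp.
  have [q' Sq' ->] := step_out_common Lp' Rp'.
  exact: common_eq.
exists (epsilon (inhabits e) P); split.
  by rewrite /psi -Lset_rcons rset_rstar // (negbTE Luav) rdeltaE.
move=> p q /[dup] /setIP[Lp Rp] Sp Sq.
rewrite /common_out pad_cons // -opA -(epsilon_spec _ _ (ex_intro _ z zP)) //.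
have [q' Sq' ->] := step_out_common Lp Rp.
exact: common_eq.
Qed.

Local Notation bm_out := (psi_star op e post rdelta psi I).

Lemma bm_out_common u v :
  {in Lset u :&: Rset v, forall q, bm_out u (rstar v) = Some (common_out u v q)}.
Proof.
elim/last_ind: u v => [|u a IHu] v q /[dup] Sq /setIP[Luaq Rq].
  by rewrite /common_out pad_init opm1 -(lout_uniq Luaq (gen_refl _ _ _ _) Rq).
have [|z [psi_z zP]] := @psi_common u a v; first by apply/set0Pn; exists q.
move: Luaq; rewrite Lset_rcons => /postP[p [m [Lp t]]].
have Sp : p \in Lset u :&: Rset (a :: v) by rewrite inE Lp; apply/preP; exists m, q.
by rewrite psi_star_rcons (IHu (a :: v) p Sp) psi_z (zP p q Sp Sq).
Qed.

Lemma bm_outP : accepts [::] e -> forall t m, bm_out t set0 = Some m <-> accepts t m.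
Proof.
move=> acc_nil t m.
have [/set0Pn[q /[dup] Sq /setIP[Ltq Fq]]|LtF0] :=
  boolP (Lset t :&: Rset [::] != set0).
  have acc := lout_accepted Ltq Fq.
  rewrite -/(rstar [::]) (bm_out_common Sq) /common_out pad_nil opm1.
  by split=> [[<-] // | /(Hfun acc)->].
split=> [|acc]; last by case/negP: LtF0; apply/meet_accepts; exists m; rewrite cats0.
case/lastP: t LtF0 => [|u a] LtF0.
  by case/negP: LtF0; apply/meet_accepts; exists e.
rewrite psi_star_rcons /psi /rset eqxx -Lset_rcons (negbNE LtF0).
by case: psi_star.
Qed.
End SubsetBimachine.

Theorem theorem1 (M : countType) (op : M -> M -> M) (e : M)
  (HM : effective_mge_monoid op e)
  (Sigma Q : finType) (I F : {set Q}) (Delta : seq (Q * Sigma * M * Q))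
  (Hfun : functional op e Delta I F)
  (Heps : in_lang op e Delta I F [::] e) :
  exists (nL nR : nat) (sL : 'I_nL) (sR : 'I_nR)
         (deltaL : 'I_nL -> Sigma -> 'I_nL) (deltaR : 'I_nR -> Sigma -> 'I_nR)
         (psi : 'I_nL -> Sigma -> 'I_nR -> option M),
    [/\ nL <= 2 ^ #|Q|, nR <= 2 ^ #|Q| &
        forall (t : seq Sigma) (m : M),
          psi_star op e deltaL deltaR psi sL t sR = Some m <->
          in_lang op e Delta I F t m].
Proof.
have [[[opA op1m opm1] op_rcancel pair_mge] _ _ _] := HM.
exists #|{set Q}|, #|{set Q}|, (enum_rank I), (enum_rank (@set0 Q)).
exists (fun i a => enum_rank (post Delta (enum_val i) a)).
exists (fun j a => enum_rank (rdelta F Delta (enum_val j) a)).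
exists (fun i a j => psi op e I F Delta (enum_val i) a (enum_val j)).
split; rewrite ?card_sets // => t m.
by rewrite psi_star_enum_rank; apply: bm_outP.
Qed.
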